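(* In the oracle setting below with $K=2$ populations (sizes $n_1,n_2$, $n=n_1+n_2$), run Algorithm BS* on $\mathcal D$. (a) In the first iteration, transferring an observation from population 1 to $C_1$ maximizes $d_w^*(C_1^{(1)},C_2^{(1)})$ if and only if $n_1\le n_2$. Furthermore, if $n_1\le n_2$ and an observation of population 1 is transferred in the first iteration, then in each of the first $n_1$ iterations an observation of population 1 is transferred to $C_1$, and $r\mapsto d_w^*(C_1^{(r)},C_2^{(r)})$ is increasing for $r=1,\dots,n_1$. (b) Under the conditions of (a), $r\mapsto d_w^*(C_1^{(r)},C_2^{(r)})$ is decreasing for $r\ge n_1$.
   Context: Let $k$ be a characteristic kernel on a separable metric space $\mathcal X$ and, for Borel probability measures $P,Q$, $d(P,Q)=\iint k\,dP\,dP+\iint k\,dQ\,dQ-2\iint k\,dP\,dQ$ (squared MMD). Oracle setting: $\mathcal D=\mathcal D_1\cup\dots\cup\mathcal D_K$ (disjoint), $\mathcal D_i$ the $n_i$ observations from population $i$, $\widehat P_i$ the empirical distribution of $\mathcal D_i$, the $\widehat P_i$ being pairwise distinct. For nonempty $S\subseteq\mathcal D$ with $m_i=|S\cap\mathcal D_i|$, $\widetilde P_S=\sum_i\frac{m_i}{|S|}\widehat P_i$; for disjoint nonempty $S_1,S_2$, $d_w^*(S_1,S_2)=\frac{|S_1||S_2|}{|S_1|+|S_2|}d(\widetilde P_{S_1},\widetilde P_{S_2})$. Algorithm BS* on $\mathcal E$: $C_1^{(0)}=\emptyset$, $C_2^{(0)}=\mathcal E$; for $r=1,\dots,|\mathcal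 E|-1$ choose $c\in C_2^{(r-1)}$ maximizing $d_w^*(C_1^{(r-1)}\cup\{c\},C_2^{(r-1)}\setminus\{c\})$ and set $C_1^{(r)}=C_1^{(r-1)}\cup\{c\}$, $C_2^{(r)}=C_2^{(r-1)}\setminus\{c\}$. ''An observation from population $i$ is transferred at iteration $r$'' means the chosen $c$ lies in $\mathcal D_i$. *)

From HB Require Import structures.
From mathcomp Require Import all_boot all_order all_algebra.
From mathcomp Require Import reals.
Set Implicit Arguments. Unset Strict Implicit. Unset Printing Implicit Defensive.
Import Order.TTheory GRing.Theory Num.Theory.
Local Open Scope ring_scope.

Section Defs.
Variables (R : realType) (X : eqType).

(* A finitely supported (signed) measure on X: sum_p p.2 * delta_{p.1}. *)
Definition fsmeas := seq (X * R).

Definition mass (P : fsmeas) (x : X) : R := \sum_(p <- P | p.1 == x) p.2.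

Definition is_fsprob (P : fsmeas) : Prop :=
  (forall p, p \in P -> 0 <= p.2) /\ \sum_(p <- P) p.2 = 1.

Definition kint (k : X -> X -> R) (P Q : fsmeas) : R :=
  \sum_(p <- P) \sum_(q <- Q) p.2 * q.2 * k p.1 q.1.

Definition mmd2 (k : X -> X -> R) (P Q : fsmeas) : R :=
  kint k P P + kint k Q Q - 2 * kint k P Q.

(* characteristic kernel, restricted to finitely supported measures:
   symmetric, positive definite, and the mean embedding is injective. *)
Definition characteristic (k : X -> X -> R) : Prop :=
  [/\ forall a b, k a b = k b a,
      forall s : fsmeas, 0 <= kint k s s &
      forall P Q, is_fsprob P -> is_fsprob Q -> mmd2 k P Q = 0 ->
        forall y, mass P y = mass Q y].

Definition scale (a : R) (P : fsmeas) : fsmeas := [seq (p.1, a * p.2) | p <- P].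

(* Oracle setting with K = 2 populations: observations are indexed by
   'I_(n1+n2); indices < n1 form population 1 (D_1), the others D_2. *)
Variables (k : X -> X -> R) (n1 n2 : nat) (x : 'I_(n1 + n2) -> X).

Definition D1 : {set 'I_(n1 + n2)} := [set j : 'I_(n1 + n2) | (j < n1)%N].
Definition D2 : {set 'I_(n1 + n2)} := [set j : 'I_(n1 + n2) | (n1 <= j)%N].

Definition emp1 : fsmeas := [seq (x j, 1 / n1%:R) | j <- enum D1].
Definition emp2 : fsmeas := [seq (x j, 1 / n2%:R) | j <- enum D2].

Definition ptilde (S : {set 'I_(n1 + n2)}) : fsmeas :=
  scale (#|S :&: D1|%:R / #|S|%:R) emp1 ++ scale (#|S :&: D2|%:R / #|S|%:R) emp2.

Definition dw (S1 S2 : {set 'I_(n1 + n2)}) : R :=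
  (#|S1|%:R * #|S2|%:R / (#|S1|%:R + #|S2|%:R)) * mmd2 k (ptilde S1) (ptilde S2).

(* objective when moving c from C_2 = complement of A into C_1 = A *)
Definition bs_obj (A : {set 'I_(n1 + n2)}) (c : 'I_(n1 + n2)) : R :=
  dw (c |: A) ((~: A) :\ c).

(* C is a run of Algorithm BS* on E = D (C r = C_1^(r), C_2^(r) = ~: C r),
   for iterations r = 1, ..., |D| - 1, with arbitrary tie-breaking. *)
Definition BSrun (C : nat -> {set 'I_(n1 + n2)}) : Prop :=
  C 0%N = set0 /\
  forall r : nat, (0 < r < n1 + n2)%N ->
    exists2 c, c \notin C r.-1 &
      C r = c |: C r.-1 /\
      forall c', c' \notin C r.-1 -> bs_obj (C r.-1) c' <= bs_obj (C r.-1) c.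

End Defs.

From HB Require Import structures.
From mathcomp Require Import all_boot all_order all_algebra.
From mathcomp Require Import reals ring lra zify.
Import Order.TTheory GRing.Theory Num.Theory.
Local Open Scope ring_scope.

(* With two populations every [ptilde S] is a mixture of the two empirical
   distributions, and [d] is a squared RKHS norm, so
   [d (ptilde S) (ptilde S^c) = (w_S - w_S^c)^2 * d(P1, P2)] where [w] is the
   weight of population 1.  Hence, with [m_i] points of population [i] in [S],
   [dw S S^c = d(P1, P2) * (m1 n2 - m2 n1)^2 / (n |S| (n - |S|))], and
   [d(P1, P2) > 0] because the kernel is characteristic.  BS* therefore only
   sees the counts: a first point of population 1 wins iff [n1 <= n2]; while
   [C1] holds [1 <= m < n1] points of population 1 only, another such point
   beats a point of population 2 since [|m n2 - n1| < (m + 1) n2]; so [C1]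
   fills up population 1 with values [m n2^2 / (n (n - m))], increasing in
   [m], after which the values [n1^2 (n2 - m2) / (n (n1 + m2))] decrease. *)

Definition split_gain {R : realFieldType} (n1 n2 m1 m2 : R) : R :=
  (m1 * n2 - m2 * n1) ^+ 2 / ((n1 + n2) * (m1 + m2) * (n1 + n2 - (m1 + m2))).

Section SplitGain.
Variable R : realFieldType.

Lemma split_gain_first_le (n1 n2 : R) : 0 <= n1 -> 0 <= n2 -> 1 < n1 + n2 ->
  (split_gain n1 n2 0 1 <= split_gain n1 n2 1 0) = (n1 <= n2).
Proof.
move=> n1_ge0 n2_ge0 n_gt1.
rewrite /split_gain !(mul0r, mul1r, sub0r, add0r, addr0, sqrrN, subr0).
rewrite ler_pM2r ?ler_sqr ?nnegrE // invr_gt0 !mulr_gt0 //; lra.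
Qed.

Lemma split_gain_pop2_lt_pop1 (n1 n2 m : R) :
  0 <= n1 -> 0 < n2 -> n1 <= n2 -> 1 <= m -> m + 1 < n1 + n2 ->
  split_gain n1 n2 m 1 < split_gain n1 n2 (m + 1) 0.
Proof.
move=> n1_ge0 n2_gt0 n12 m_ge1 mn; rewrite /split_gain !(mul0r, subr0, addr0, mul1r).
rewrite ltr_pM2r ?invr_gt0 ?mulr_gt0; try lra.
rewrite -subr_gt0.
have -> : ((m + 1) * n2) ^+ 2 - (m * n2 - n1) ^+ 2 =
          (n2 + n1) * ((2 * m + 1) * n2 - n1) by ring.
apply: mulr_gt0; first lra.
have : 0 <= (m - 1) * n2 by apply: mulr_ge0; lra.
lra.
Qed.

Lemma split_gain_pop1E (n1 n2 m : R) : n1 + n2 != 0 -> m != 0 -> n1 + n2 - m != 0 ->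
  split_gain n1 n2 m 0 = n2 ^+ 2 / (n1 + n2) * (m / (n1 + n2 - m)).
Proof. by move=> *; rewrite /split_gain; field; apply/and3P. Qed.

Lemma split_gain_allpop1E (n1 n2 m : R) : n1 + n2 != 0 -> n1 + m != 0 -> n2 - m != 0 ->
  split_gain n1 n2 n1 m = n1 ^+ 2 / (n1 + n2) * ((n2 - m) / (n1 + m)).
Proof.
move=> *; rewrite /split_gain.
have -> : n1 + n2 - (n1 + m) = n2 - m by ring.
by field; apply/and3P.
Qed.

Lemma split_gain_pop1_lt (n1 n2 m : R) : 0 < n2 -> 0 < m -> m + 1 < n1 + n2 ->
  split_gain n1 n2 m 0 < split_gain n1 n2 (m + 1) 0.
Proof.
move=> n2_gt0 m_gt0 mn.
rewrite !split_gain_pop1E; try by rewrite gt_eqF //; lra.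
rewrite ltr_pM2l ?divr_gt0 ?exprn_gt0 //; try lra.
rewrite ltr_pdivrMr; last lra.
rewrite mulrAC ltr_pdivlMr; last lra.
nra.
Qed.

Lemma split_gain_allpop1_lt (n1 n2 m : R) : 0 < n1 -> 0 <= m -> m + 1 < n2 ->
  split_gain n1 n2 n1 (m + 1) < split_gain n1 n2 n1 m.
Proof.
move=> n1_gt0 m_ge0 mn.
rewrite !split_gain_allpop1E; try by rewrite gt_eqF //; lra.
rewrite ltr_pM2l ?divr_gt0 ?exprn_gt0 //; try lra.
rewrite ltr_pdivrMr; last lra.
rewrite mulrAC ltr_pdivlMr; last lra.
nra.
Qed.

End SplitGain.

Section KernelMeanEmbedding.
Variables (R : realType) (X : eqType) (k : X -> X -> R).

Lemma kint_catl (P Q T : fsmeas R X) : kint k (P ++ Q) T = kint k P T + kint k Q T.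
Proof. by rewrite /kint big_cat. Qed.

Lemma kint_catr (P Q T : fsmeas R X) : kint k P (Q ++ T) = kint k P Q + kint k P T.
Proof. by rewrite /kint -big_split; apply: eq_bigr => p _; rewrite big_cat. Qed.

Lemma kint_scalel a (P Q : fsmeas R X) : kint k (scale a P) Q = a * kint k P Q.
Proof.
rewrite /kint /scale big_map mulr_sumr; apply: eq_bigr => p _.
by rewrite mulr_sumr; apply: eq_bigr => q _ /=; ring.
Qed.

Lemma kint_scaler a (P Q : fsmeas R X) : kint k P (scale a Q) = a * kint k P Q.
Proof.
rewrite /kint /scale mulr_sumr; apply: eq_bigr => p _.
by rewrite big_map mulr_sumr; apply: eq_bigr => q _ /=; ring.
Qed.

Hypothesis k_sym : forall a b, k a b = k b a.

Lemma kintC (P Q : fsmeas R X) : kint k P Q = kint k Q P.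
Proof.
rewrite /kint exchange_big; apply: eq_bigr => q _; apply: eq_bigr => p _.
by rewrite k_sym; ring.
Qed.

Lemma mmd2_ge0 (e1 e2 : fsmeas R X) :
  (forall s : fsmeas R X, 0 <= kint k s s) -> 0 <= mmd2 k e1 e2.
Proof.
move/(_ (e1 ++ scale (-1) e2)).
rewrite !(kint_catl, kint_catr, kint_scalel, kint_scaler) (kintC e2 e1) /mmd2.
lra.
Qed.

Lemma mmd2_mix (e1 e2 : fsmeas R X) u1 u2 v1 v2 : u1 + u2 = v1 + v2 ->
  mmd2 k (scale u1 e1 ++ scale u2 e2) (scale v1 e1 ++ scale v2 e2) =
  (u1 - v1) ^+ 2 * mmd2 k e1 e2.
Proof.
move=> uv; rewrite /mmd2 !(kint_catl, kint_catr, kint_scalel, kint_scaler).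
rewrite (kintC e2 e1); have -> : u2 = v1 + v2 - u1 by rewrite -uv; ring.
ring.
Qed.

Lemma dw_mixE (e1 e2 : fsmeas R X) (a1 a2 b1 b2 : R) :
  0 <= a1 -> 0 <= a2 -> 0 <= b1 -> 0 <= b2 ->
  (a1 + a2) * (b1 + b2) / ((a1 + a2) + (b1 + b2)) *
    mmd2 k (scale (a1 / (a1 + a2)) e1 ++ scale (a2 / (a1 + a2)) e2)
           (scale (b1 / (b1 + b2)) e1 ++ scale (b2 / (b1 + b2)) e2) =
  mmd2 k e1 e2 * split_gain (a1 + b1) (a2 + b2) a1 a2.
Proof.
move=> a1_ge0 a2_ge0 b1_ge0 b2_ge0; rewrite /split_gain.
have [a0|a_neq0] := eqVneq (a1 + a2) 0.
  have [-> ->] : a1 = 0 /\ a2 = 0 by split; lra.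
  by rewrite add0r !mul0r sub0r sqrrN expr0n !mul0r mulr0.
have [b0|b_neq0] := eqVneq (b1 + b2) 0.
  have [-> ->] : b1 = 0 /\ b2 = 0 by split; lra.
  by rewrite !(addr0, mulr0, mul0r, subrr, invr0).
rewrite mmd2_mix; last by rewrite -!mulrDl !divff.
have ab_neq0 : a1 + a2 + (b1 + b2) != 0.
  by rewrite paddr_eq0 ?addr_ge0 // (negbTE a_neq0).
have -> : a1 + b1 + (a2 + b2) - (a1 + a2) = b1 + b2 by ring.
have -> : a1 + b1 + (a2 + b2) = a1 + a2 + (b1 + b2) by ring.
by field; apply/and3P.
Qed.

End KernelMeanEmbedding.

Lemma D2E n1 n2 : D2 n1 n2 = ~: D1 n1 n2.
Proof. by apply/setP => j; rewrite !inE leqNgt. Qed.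

Lemma card_D1 n1 n2 : #|D1 n1 n2| = n1.
Proof.
have -> : D1 n1 n2 = [set lshift n2 i | i : 'I_n1].
  apply/setP => j; rewrite !inE; apply/idP/imsetP => [j_lt | [i _ ->]].
    by exists (Ordinal j_lt) => //; apply: val_inj.
  by rewrite /= ltn_ord.
by rewrite card_imset ?card_ord //; apply: lshift_inj.
Qed.

Lemma card_D2 n1 n2 : #|D2 n1 n2| = n2.
Proof. by rewrite D2E cardsCs setCK card_D1 card_ord addKn. Qed.

Lemma fsprob_uniform (R : realType) (X : eqType) (T : finType) (A : {set T})
    (f : T -> X) (w : R) :
  0 <= w -> #|A|%:R * w = 1 -> is_fsprob [seq (f j, w) | j <- enum A].
Proof.
move=> w_ge0 Aw; split; first by move=> p /mapP [j _ ->].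
by rewrite big_map big_enum /= sumr_const -mulr_natl.
Qed.

Section TwoPopulations.
Context {R : realType} {X : eqType} {k : X -> X -> R} {n1 n2 : nat}.
Context {x : 'I_(n1 + n2) -> X}.

Local Notation d12 := (mmd2 k (emp1 R x) (emp2 R x)).

Lemma fsprob_emp1 : (0 < n1)%N -> is_fsprob (emp1 R x).
Proof.
move=> n1_gt0; apply: fsprob_uniform; first by rewrite divr_ge0.
by rewrite card_D1 mul1r divff // pnatr_eq0 -lt0n.
Qed.

Lemma fsprob_emp2 : (0 < n2)%N -> is_fsprob (emp2 R x).
Proof.
move=> n2_gt0; apply: fsprob_uniform; first by rewrite divr_ge0.
by rewrite card_D2 mul1r divff // pnatr_eq0 -lt0n.
Qed.

Lemma mmd2_emp_gt0 : characteristic k -> (0 < n1)%N -> (0 < n2)%N ->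
  (exists y, mass (emp1 R x) y != mass (emp2 R x) y) -> 0 < d12.
Proof.
case=> k_sym k_psd k_inj n1_gt0 n2_gt0 [y].
apply: contraNT; rewrite -leNgt => d12_le0.
have d12_0 : d12 = 0 by apply/le_anti; rewrite d12_le0 mmd2_ge0.
by rewrite (k_inj _ _ (fsprob_emp1 n1_gt0) (fsprob_emp2 n2_gt0) d12_0 y).
Qed.

Hypothesis k_sym : forall a b, k a b = k b a.

Lemma dw_complE (S : {set 'I_(n1 + n2)}) :
  dw k x S (~: S) =
  d12 * split_gain n1%:R n2%:R #|S :&: D1 n1 n2|%:R #|S :&: D2 n1 n2|%:R.
Proof.
have cardCI B : #|~: S :&: B| = (#|B| - #|S :&: B|)%N.
  by rewrite -(cardsID S B) [B :&: S]setIC addKn setDE setIC.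
have cardD12 (T : {set 'I_(n1 + n2)}) : #|T| = (#|T :&: D1 n1 n2| + #|T :&: D2 n1 n2|)%N.
  by rewrite D2E -setDE cardsID.
have m1_le : (#|S :&: D1 n1 n2| <= n1)%N.
  by rewrite -[X in (_ <= X)%N](card_D1 n1 n2) subset_leq_card ?subsetIr.
have m2_le : (#|S :&: D2 n1 n2| <= n2)%N.
  by rewrite -[X in (_ <= X)%N](card_D2 n1 n2) subset_leq_card ?subsetIr.
rewrite /dw /ptilde [#|S|]cardD12 [#|~: S|]cardD12 !cardCI card_D1 card_D2 !natrD.
have -> : n1%:R = #|S :&: D1 n1 n2|%:R + (n1 - #|S :&: D1 n1 n2|)%:R :> R.
  by rewrite -natrD subnKC.
have -> : n2%:R = #|S :&: D2 n1 n2|%:R + (n2 - #|S :&: D2 n1 n2|)%:R :> R.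
  by rewrite -natrD subnKC.
by apply: dw_mixE.
Qed.

Lemma dw_compl_subD1 (S : {set 'I_(n1 + n2)}) : S \subset D1 n1 n2 ->
  dw k x S (~: S) = d12 * split_gain n1%:R n2%:R #|S|%:R 0.
Proof.
move=> S_D1; rewrite dw_complE (setIidPl S_D1) D2E.
by rewrite -setDE (eqP (_ : S :\: _ == set0)) ?cards0 // setD_eq0.
Qed.

Lemma dw_compl_supD1 (S : {set 'I_(n1 + n2)}) : D1 n1 n2 \subset S ->
  dw k x S (~: S) = d12 * split_gain n1%:R n2%:R n1%:R (#|S| - n1)%:R.
Proof.
move=> D1_S; rewrite dw_complE (setIidPr D1_S) card_D1 -(cardsID (D1 n1 n2) S).
by rewrite (setIidPr D1_S) card_D1 addKn D2E setDE.
Qed.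

Lemma bs_objE (A : {set 'I_(n1 + n2)}) c : bs_obj k x A c = dw k x (c |: A) (~: (c |: A)).
Proof. by rewrite /bs_obj setCU setDE setIC. Qed.

Lemma bs_obj_subD1E (A : {set 'I_(n1 + n2)}) c : A \subset D1 n1 n2 -> c \notin A ->
  bs_obj k x A c = d12 * if c \in D1 n1 n2 then split_gain n1%:R n2%:R (#|A|%:R + 1) 0
                         else split_gain n1%:R n2%:R #|A|%:R 1.
Proof.
move=> A_D1 cA; rewrite bs_objE.
case: ifP => cD1.
  by rewrite dw_compl_subD1 ?subUset ?sub1set ?cD1 // cardsU1 cA add1n -natr1.
rewrite dw_complE setIUl (setIidPl A_D1) D2E setIUl.
have -> : [set c] :&: D1 n1 n2 = set0 by apply/disjoint_setI0; rewrite disjoints1 cD1.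
have -> : [set c] :&: ~: D1 n1 n2 = [set c] by apply/setIidPl; rewrite sub1set inE cD1.
have -> : A :&: ~: D1 n1 n2 = set0 by apply/eqP; rewrite -setDE setD_eq0.
by rewrite set0U setU0 cards1.
Qed.

Section Separated.
Hypotheses (n1_gt0 : (0 < n1)%N) (n2_gt0 : (0 < n2)%N) (d12_gt0 : 0 < d12).

Lemma bs_obj0_max c : c \in D1 n1 n2 ->
  (forall c', bs_obj k x set0 c' <= bs_obj k x set0 c) <-> (n1 <= n2)%N.
Proof.
move=> cD1.
have obj0 c' := bs_obj_subD1E _ _ (sub0set (D1 n1 n2)) (negbT (in_set0 c')).
have first_le :
    (split_gain n1%:R n2%:R 0 1 <= split_gain n1%:R n2%:R 1 0 :> R) = (n1 <= n2)%N.
  by rewrite split_gain_first_le ?ler_nat // -natrD ltr1n; lia.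
have n1_lt : (n1 < n1 + n2)%N by lia.
split => [|n12 c'].
  move/(_ (Ordinal n1_lt)); rewrite !obj0 cD1 inE ltnn cards0 add0r.
  by rewrite ler_pM2l // first_le.
rewrite !obj0 cD1 cards0 add0r; case: ifP => _ //.
by rewrite ler_pM2l // first_le.
Qed.

Lemma bs_obj_D1_lt (A : {set 'I_(n1 + n2)}) c c' :
  (n1 <= n2)%N -> A \subset D1 n1 n2 -> (0 < #|A|)%N ->
  c \notin D1 n1 n2 -> c' \in D1 n1 n2 :\: A -> bs_obj k x A c < bs_obj k x A c'.
Proof.
move=> n12 A_D1 A_gt0 cD1 /setDP [c'D1 c'A].
have cA : c \notin A by apply: contra cD1; apply/subsetP.
have A_lt : (#|A| < n1)%N.
  have c'A_D1 : c' |: A \subset D1 n1 n2 by rewrite subUset sub1set c'D1.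
  by have := subset_leq_card c'A_D1; rewrite cardsU1 c'A card_D1.
rewrite !bs_obj_subD1E // c'D1 (negbTE cD1) ltr_pM2l //.
apply: split_gain_pop2_lt_pop1; rewrite ?ler0n ?ltr0n ?ler_nat ?ler1n //.
by rewrite natr1 -natrD ltr_nat; lia.
Qed.

Section BSRun.
Context {C : nat -> {set 'I_(n1 + n2)}}.
Hypothesis C_run : BSrun k x C.

Lemma card_BSrun r : (r < n1 + n2)%N -> #|C r| = r.
Proof.
case: C_run => C0 C_step; elim: r => [|r IH] r_lt; first by rewrite C0 cards0.
have [c cC [-> _]] := C_step r.+1 r_lt.
by rewrite cardsU1 cC IH // ltnW.
Qed.

Lemma BSrun_subS r : (r.+1 < n1 + n2)%N -> C r \subset C r.+1.
Proof.
move=> lt_n; case: C_run => _ /(_ r.+1 lt_n) [c _ [-> _]].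
exact: subsetUr.
Qed.

Lemma BSrun_sub r d : (r + d < n1 + n2)%N -> C r \subset C (r + d).
Proof.
elim: d => [|d IH] lt_n; first by rewrite addn0.
by rewrite addnS in lt_n *; exact: subset_trans (IH (ltnW lt_n)) (BSrun_subS _ lt_n).
Qed.

Hypotheses (n12 : (n1 <= n2)%N) (C1_D1 : C 1 :\: C 0 \subset D1 n1 n2).

Lemma BSrun_subD1 r : (r <= n1)%N -> C r \subset D1 n1 n2.
Proof.
case: C_run => C0 C_step.
elim: r => [|[|r] IH] r_le; first by rewrite C0 sub0set.
  by rewrite -(setD0 (C 1)) -C0.
have CD1 := IH (ltnW r_le).
have card_C : #|C r.+1| = r.+1 by rewrite card_BSrun //; lia.
have r2_lt : (0 < r.+2 < n1 + n2)%N by lia.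
have [c cC [-> c_max]] := C_step r.+2 r2_lt.
rewrite subUset CD1 andbT sub1set; apply: contraT => cD1.
have [c' c'_in] : exists c', c' \in D1 n1 n2 :\: C r.+1.
  by apply/set0Pn; rewrite -card_gt0 cardsD (setIidPr CD1) card_D1 card_C subn_gt0.
have := c_max c' (setDP c'_in).2.
by rewrite leNgt bs_obj_D1_lt // card_C.
Qed.

Lemma BSrun_supD1 r : (n1 <= r < n1 + n2)%N -> D1 n1 n2 \subset C r.
Proof.
case/andP=> n1_le r_lt.
have C_n1 : C n1 = D1 n1 n2.
  by apply/eqP; rewrite eqEcard BSrun_subD1 // card_D1 card_BSrun //; lia.
by rewrite -C_n1 -(subnKC n1_le) BSrun_sub // subnKC.
Qed.

Lemma BSrun_dw_increasing r : (0 < r < n1)%N ->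
  dw k x (C r) (~: C r) < dw k x (C r.+1) (~: C r.+1).
Proof.
case/andP=> r_gt0 r_lt.
rewrite !dw_compl_subD1 ?BSrun_subD1 ?card_BSrun; try lia.
rewrite ltr_pM2l // -natr1 split_gain_pop1_lt ?ltr0n // natr1 -natrD ltr_nat; lia.
Qed.

Lemma BSrun_dw_decreasing r : (n1 <= r)%N -> (r.+1 < n1 + n2)%N ->
  dw k x (C r.+1) (~: C r.+1) < dw k x (C r) (~: C r).
Proof.
move=> n1_le r_lt.
rewrite !dw_compl_supD1 ?BSrun_supD1 ?card_BSrun; try lia.
rewrite ltr_pM2l // subSn // -natr1 split_gain_allpop1_lt ?ltr0n ?ler0n //.
by rewrite natr1 ltr_nat; lia.
Qed.
End BSRun.

End Separated.

End TwoPopulations.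

Theorem lemma1 (R : realType) (X : eqType) (k : X -> X -> R) (n1 n2 : nat)
    (x : 'I_(n1 + n2) -> X) :
  characteristic k -> (0 < n1)%N -> (0 < n2)%N ->
  (exists y, mass (emp1 R x) y != mass (emp2 R x) y) ->
  (* (a), first sentence *)
  (forall c : 'I_(n1 + n2), c \in D1 n1 n2 ->
     ((forall c', bs_obj k x set0 c' <= bs_obj k x set0 c) <-> (n1 <= n2)%N)) /\
  (forall C : nat -> {set 'I_(n1 + n2)}, BSrun k x C ->
     (n1 <= n2)%N -> C 1%N :\: C 0%N \subset D1 n1 n2 ->
     (* (a), second sentence *)
     (forall r, (0 < r <= n1)%N -> C r :\: C r.-1 \subset D1 n1 n2) /\
     (forall r, (0 < r < n1)%N ->
        dw k x (C r) (~: C r) < dw k x (C r.+1) (~: C r.+1)) /\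
     (* (b) *)
     (forall r, (n1 <= r)%N -> (r.+1 < n1 + n2)%N ->
        dw k x (C r.+1) (~: C r.+1) < dw k x (C r) (~: C r))).
Proof.
move=> k_char n1_gt0 n2_gt0 emp_neq.
have k_sym : forall a b, k a b = k b a by case: k_char.
have d12_gt0 : 0 < mmd2 k (emp1 R x) (emp2 R x) by exact: mmd2_emp_gt0.
split=> [c cD1 | C C_run n12 C1_D1]; first exact: bs_obj0_max.
have C_D1 := BSrun_subD1 k_sym n1_gt0 n2_gt0 d12_gt0 C_run n12 C1_D1.
split; [|split].
- by move=> r /andP [_ /C_D1]; apply: subset_trans (subsetDl _ _).
- exact: BSrun_dw_increasing.
- exact: BSrun_dw_decreasing.
Qed.
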